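(* Let $\mathcal{X}$ be a set of feasible solutions and $f_1,\dots,f_m:\mathcal{X}\to\mathbb{R}$. Fix $K\ge1$, a preference vector $\boldsymbol{\lambda}$ with $\lambda_i\ge0$, $\sum_i\lambda_i=1$, and $\boldsymbol{z}^*\in\mathbb{R}^m$. For $X_K=\{\boldsymbol{x}^{(1)},\dots,\boldsymbol{x}^{(K)}\}\subseteq\mathcal{X}$ let $$g^{(\mathrm{TCH\text{-}Set})}(X_K\mid\boldsymbol{\lambda})=\max_{1\le i\le m}\Big\{\lambda_i\Big(\min_{1\le k\le K}f_i(\boldsymbol{x}^{(k)})-z_i^*\Big)\Big\},$$ and for $\mu>0$, $\mu_1,\dots,\mu_m>0$ let $$g^{(\mathrm{STCH\text{-}Set})}_{\mu,\{\mu_i\}}(X_K\mid\boldsymbol{\lambda})=\mu\log\left(\sum_{i=1}^m\exp\left(\frac{\lambda_i\left(-\mu_i\log\left(\sum_{k=1}^K e^{-f_i(\boldsymbol{x}^{(k)})/\mu_i}\right)-z_i^*\right)}{\mu}\right)\right).$$ Then $g^{(\mathrm{STCH\text{-}Set})}_{\mu,\{\mu_i\}}(\cdot\mid\boldsymbol{\lambda})$ is a uniform smooth approximation of $g^{(\mathrm{TCH\text{-}Set})}(\cdot\mid\boldsymbol{\lambda})$: for every set $X_K$ of $K$ solutions in $\mathcal{X}$, $$\lim_{\mu\downarrow0,\ \mu_i\downarrow0\ \forall i}g^{(\mathrm{STCH\text{-}Set})}_{\mu,\{\mu_i\}}(X_K\mid\boldsymbol{\lambda})=g^{(\mathrm{TCH\text{-}Set})}(X_K\mid\boldsymbol{\lambda}),$$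 with the convergence uniform over all such sets $X_K$. *)

From HB Require Import structures.
From mathcomp Require Import all_boot all_order all_algebra.
From mathcomp Require Import all_classical all_reals all_analysis.
Set Implicit Arguments. Unset Strict Implicit. Unset Printing Implicit Defensive.
Import Order.TTheory GRing.Theory Num.Theory.
Local Open Scope ring_scope.

(* Minimum / maximum of a finite sequence of reals; the seed is the head
   of the sequence, so for a nonempty sequence these are the true min/max. *)
Definition seqmin {R : realType} (s : seq R) : R :=
  \big[Num.min/head 0 s]_(y <- s) y.
Definition seqmax {R : realType} (s : seq R) : R :=
  \big[Num.max/head 0 s]_(y <- s) y.

Definition g_tch_set {R : realType} {X : Type} (m K : nat)
  (f : 'I_m -> X -> R) (lam z : 'I_m -> R) (x : 'I_K -> X) : R :=
  seqmax [seq lam i * (seqmin [seq f i (x k) | k <- enum 'I_K] - z i)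
         | i <- enum 'I_m].

Definition g_stch_set {R : realType} {X : Type} (m K : nat)
  (f : 'I_m -> X -> R) (lam z : 'I_m -> R) (mu : R) (mus : 'I_m -> R)
  (x : 'I_K -> X) : R :=
  mu * ln (\sum_(i < m)
     expR (lam i * (- mus i * ln (\sum_(k < K) expR (- f i (x k) / mus i)) - z i)
           / mu)).

(* The log-sum-exp [lse mu b = mu * ln (sum_i exp (b_i / mu))] is squeezed
   between [max_i b_i] and [max_i b_i + mu * ln n].  Applied to [-f_i] with
   parameter [mu_i], it shows that the inner smooth minimum lies within
   [mu_i * ln K] below [min_k f_i(x^(k))]; multiplying by [0 <= lam_i <= 1]
   and taking maxima keeps this error, and the outer log-sum-exp adds at most
   [mu * ln m].  Hence [|STCH - TCH| <= delta * max (ln K, ln m)] whenever all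
   smoothing parameters are below [delta], whatever the solutions are. *)

From HB Require Import structures.
From mathcomp Require Import all_boot all_order all_algebra.
From mathcomp Require Import all_classical all_reals all_analysis.
From mathcomp Require Import lra.
Set Implicit Arguments.
Unset Strict Implicit.
Unset Printing Implicit Defensive.
Import Order.TTheory GRing.Theory Num.Theory.
Local Open Scope ring_scope.

Section SeqMinMax.
Variable R : realType.
Implicit Types (s : seq R) (y : R).

Lemma le_seqmax s y : y \in s -> y <= seqmax s.
Proof. by move=> ys; exact: (le_bigmax_seq _ _ predT id ys). Qed.

Lemma seqmin_le s y : y \in s -> seqmin s <= y.
Proof. by move=> ys; exact: (ge_bigmin_seq _ _ predT id ys). Qed.

Lemma seqmax_mem s : s != [::] -> seqmax s \in s.
Proof.
case: s => // y s _; rewrite /seqmax big_seq.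
apply: (big_ind (fun v => v \in y :: s)) => //; first exact: mem_head.
by move=> a b ? ?; case: leP.
Qed.

Lemma seqmin_mem s : s != [::] -> seqmin s \in s.
Proof.
case: s => // y s _; rewrite /seqmin big_seq.
apply: (big_ind (fun v => v \in y :: s)) => //; first exact: mem_head.
by move=> a b ? ?; case: leP.
Qed.

Variable n : nat.
Implicit Types (b c : 'I_n -> R).

Let ord_seq_neq0 b : (0 < n)%N -> [seq b i | i <- enum 'I_n] != [::].
Proof. by rewrite -size_eq0 size_map size_enum_ord -lt0n. Qed.

Lemma le_seqmax_ord b i : b i <= seqmax [seq b j | j <- enum 'I_n].
Proof. by apply/le_seqmax/map_f; rewrite mem_enum. Qed.

Lemma seqmin_le_ord b i : seqmin [seq b j | j <- enum 'I_n] <= b i.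
Proof. by apply/seqmin_le/map_f; rewrite mem_enum. Qed.

Lemma eq_seqmax_ord b : (0 < n)%N ->
  exists i, seqmax [seq b j | j <- enum 'I_n] = b i.
Proof. by move/(ord_seq_neq0 b)/seqmax_mem/mapP => [i _ ->]; exists i. Qed.

Lemma eq_seqmin_ord b : (0 < n)%N ->
  exists i, seqmin [seq b j | j <- enum 'I_n] = b i.
Proof. by move/(ord_seq_neq0 b)/seqmin_mem/mapP => [i _ ->]; exists i. Qed.

Lemma le_seqmax2_ord b c : (0 < n)%N -> (forall i, b i <= c i) ->
  seqmax [seq b j | j <- enum 'I_n] <= seqmax [seq c j | j <- enum 'I_n].
Proof.
move=> n0 bc; have [i ->] := eq_seqmax_ord b n0.
exact: le_trans (bc i) (le_seqmax_ord c i).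
Qed.

End SeqMinMax.

Lemma ln_natr_ge0 (R : realType) n : (0 < n)%N -> 0 <= ln (n%:R : R).
Proof. by move=> n_gt0; rewrite ln_ge0 // ler1n. Qed.

Section LogSumExp.
Variables (R : realType) (n : nat).
Implicit Types (mu M : R) (b : 'I_n -> R).

Definition lse mu b : R := mu * ln (\sum_(i < n) expR (b i / mu)).

Let sum_expR_ge mu b j : expR (b j / mu) <= \sum_(i < n) expR (b i / mu).
Proof. by rewrite (bigD1 j) //= lerDl sumr_ge0 // => i _; exact: expR_ge0. Qed.

Let sum_expR_gt0 mu b (j : 'I_n) : 0 < \sum_(i < n) expR (b i / mu).
Proof. exact: lt_le_trans (expR_gt0 _) (sum_expR_ge mu b j). Qed.

Lemma le_lse mu b j : 0 < mu -> b j <= lse mu b.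
Proof.
move=> mu0; rewrite /lse mulrC -ler_pdivrMr // -[leLHS]expRK.
by rewrite ler_ln ?posrE ?expR_gt0 ?(sum_expR_gt0 _ _ j) ?sum_expR_ge.
Qed.

Lemma lse_le mu b M : (0 < n)%N -> 0 < mu -> (forall i, b i <= M) ->
  lse mu b <= M + mu * ln n%:R.
Proof.
move=> n0 mu0 bM.
have sum_le : \sum_(i < n) expR (b i / mu) <= n%:R * expR (M / mu).
  rewrite mulr_natl -[in leRHS](card_ord n) -sumr_const.
  by apply: ler_sum => i _; rewrite ler_expR ler_pM2r ?invr_gt0.
have ln_le : ln (\sum_(i < n) expR (b i / mu)) <= ln n%:R + M / mu.
  rewrite -[X in _ <= _ + X]expRK -lnM ?posrE ?ltr0n ?expR_gt0 //.
  by rewrite ler_ln ?posrE ?mulr_gt0 ?ltr0n ?expR_gt0 ?(sum_expR_gt0 _ _ (Ordinal n0)).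
rewrite /lse (le_trans (ler_wpM2l (ltW mu0) ln_le)) //.
by rewrite mulrDr addrC mulrCA mulfV ?gt_eqF // mulr1.
Qed.

End LogSumExp.

Section SmoothExtrema.
Variables (R : realType) (n : nat) (mu : R).
Hypotheses (n_gt0 : (0 < n)%N) (mu_gt0 : 0 < mu).

Lemma lse_seqmax_bounds (b : 'I_n -> R) :
  let M := seqmax [seq b i | i <- enum 'I_n] in
  M <= lse mu b <= M + mu * ln n%:R.
Proof.
have [j Mj] := eq_seqmax_ord b n_gt0.
by rewrite /= Mj le_lse //= -Mj lse_le // => i; exact: le_seqmax_ord.
Qed.

Lemma oppr_lse_seqmin_bounds (a : 'I_n -> R) :
  let m := seqmin [seq a i | i <- enum 'I_n] in
  m - mu * ln n%:R <= - lse mu (fun i => - a i) <= m.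
Proof.
have [j mj] := eq_seqmin_ord a n_gt0.
have lo := le_lse (fun i => - a i) j mu_gt0.
have hi : lse mu (fun i => - a i) <= - a j + mu * ln n%:R.
  by apply: lse_le => // i; rewrite lerN2 -mj seqmin_le_ord.
by rewrite /= mj; apply/andP; split; lra.
Qed.

End SmoothExtrema.

Section TchebycheffSet.
Variables (R : realType) (X : Type) (m K : nat).
Variables (f : 'I_m -> X -> R) (lam z : 'I_m -> R).
Hypotheses (m_gt0 : (0 < m)%N) (K_gt0 : (0 < K)%N).
Hypothesis lam01 : forall i, 0 <= lam i <= 1.

Lemma g_stch_setE (mu : R) (mus : 'I_m -> R) (x : 'I_K -> X) :
  g_stch_set f lam z mu mus x =
  lse mu (fun i => lam i * (- lse (mus i) (fun k => - f i (x k)) - z i)).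
Proof.
by rewrite /g_stch_set /lse; congr (_ * ln _); apply: eq_bigr => i _; rewrite mulNr.
Qed.

Lemma g_stch_set_bounds (mu d : R) (mus : 'I_m -> R) (x : 'I_K -> X) :
  0 < mu -> (forall i, 0 < mus i <= d) ->
  g_tch_set f lam z x - d * ln K%:R <= g_stch_set f lam z mu mus x
    <= g_tch_set f lam z x + mu * ln m%:R.
Proof.
move=> mu_gt0 mus_d.
have lnK_ge0 := ln_natr_ge0 R K_gt0.
pose a i := seqmin [seq f i (x k) | k <- enum 'I_K].
pose s i := - lse (mus i) (fun k => - f i (x k)).
have s_bounds i : a i - d * ln K%:R <= s i <= a i.
  have /andP[mus_gt0 mus_le] := mus_d i.
  have /andP[lo hi] := oppr_lse_seqmin_bounds K_gt0 mus_gt0 (fun k => f i (x k)).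
  have scale : mus i * ln K%:R <= d * ln K%:R by rewrite ler_wpM2r.
  by rewrite /s /a; apply/andP; split; lra.
pose c i := lam i * (a i - z i).
pose b i := lam i * (s i - z i).
have b_le_c i : b i <= c i.
  by have /andP[] := s_bounds i; have /andP[] := lam01 i; rewrite /b /c; nra.
have c_le_b i : c i - d * ln K%:R <= b i.
  by have /andP[] := s_bounds i; have /andP[] := lam01 i; rewrite /b /c; nra.
have [j cj] := eq_seqmax_ord c m_gt0.
have c_le_bj := c_le_b j.
have b_le_max := le_seqmax_ord b j.
have max_le := le_seqmax2_ord m_gt0 b_le_c; rewrite cj in max_le.
have /andP[max_le_lse lse_le_max] := lse_seqmax_bounds m_gt0 mu_gt0 b.
rewrite g_stch_setE -/(s _) -/(b _) /g_tch_set -/(a _) -/(c _) cj.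
by apply/andP; split; lra.
Qed.

End TchebycheffSet.

Theorem theorem3 (R : realType) (X : Type) (m K : nat)
  (f : 'I_m -> X -> R) (lam z : 'I_m -> R)
  (hm : (0 < m)%N) (hK : (0 < K)%N)
  (hlam0 : forall i, 0 <= lam i) (hlam1 : \sum_(i < m) lam i = 1) :
  forall eps : R, 0 < eps ->
  exists delta : R, 0 < delta /\
    forall (mu : R) (mus : 'I_m -> R),
      0 < mu -> mu < delta ->
      (forall i, 0 < mus i /\ mus i < delta) ->
      forall x : 'I_K -> X, injective x ->
        `| g_stch_set f lam z mu mus x - g_tch_set f lam z x | < eps.
Proof.
move=> eps eps_gt0.
have lnK_ge0 := ln_natr_ge0 R hK.
have lnm_ge0 := ln_natr_ge0 R hm.
have L_gt0 : 0 < ln (K%:R : R) + ln m%:R + 1 by lra.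
set delta := eps / (ln (K%:R : R) + ln m%:R + 1).
have delta_gt0 : 0 < delta by rewrite divr_gt0.
have eps_split : delta * ln K%:R + delta * ln m%:R + delta = eps.
  by rewrite -[X in _ + X]mulr1 -!mulrDr /delta divfK ?gt_eqF.
exists delta; split=> //.
move=> mu mus mu_gt0 mu_lt mus_d x _.
have lam01 i : 0 <= lam i <= 1.
  by rewrite hlam0 -hlam1 (bigD1 i) //= lerDl sumr_ge0.
have mus_le i : 0 < mus i <= delta by have [? /ltW ->] := mus_d i; rewrite andbT.
have /andP[lo hi] := g_stch_set_bounds f z hm hK lam01 x mu_gt0 mus_le.
have mu_lnm : mu * ln m%:R <= delta * ln m%:R by rewrite ler_wpM2r // ltW.
have delta_lnm : 0 <= delta * ln m%:R by rewrite mulr_ge0 // ltW.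
have delta_lnK : 0 <= delta * ln K%:R by rewrite mulr_ge0 // ltW.
by rewrite ltr_norml; apply/andP; split; lra.
Qed.
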